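(* Let $t$ be a closed $\Sigma'$-term, $\phi$ a dAEL sentence over $\Sigma$, $\mathcal B$ a universally consistent (consistent) distributed belief pair, and $J$ a $\Sigma'$-structure. Then $\tau_{\mathit{formula}}(t,\phi)^{\tau_{\mathit{beliefpair}}(\mathcal B),J}=\phi^{\mathcal B,J_t}$.
   Context: Standing setup (dAEL). $\Sigma=\Sigma_o\uplus\Sigma_s$ is a first-order vocabulary (objective and subjective symbols). A nonempty domain $D$ and a $\Sigma_o$-structure $I_o$ with domain $D$ are fixed, as is a set of agents $\mathcal{A}\subseteq D$. For each $A\in\mathcal{A}$ there is a constant $A\in\Sigma_o$ with $A^{I_o}=A$, and $\Sigma_o$ contains a unary predicate $\mathrm{Apred}$ with $\mathrm{Apred}^{I_o}=\mathcal{A}$. ''Structure'' means a $\Sigma$-structure with domain $D$ that agrees with $I_o$ on $\Sigma_o$. Formulas of dAEL are built from atoms $P(\bar t)$ ($P\in\Sigma$ or equality) using $\wedge,\neg,\forall x$, and the modal rule: if $\varphi$ is a formula and $t$ a term then $K_t\varphi$ is a formula. Truth values are $\mathbf t,\mathbf f,\mathbf u$ with truth order $\mathbf f<_t\mathbf u<_t\mathbf t$; $\mathbf t^{-1}=\mathbf f$, $\mathbf f^{-1}=\mathbf t$, $\mathbf u^{-1}=\mathbf u$. A possible world structure (PWS) is a set of structures. A distributed possible world structure (DPWS) is a family $\mathcal Q=(\mathcal Q_A)_{A\in\mathcal A}$ of PWSs. A distributed belief pair (DBP) is a pair $\mathcal B=(\mathcal B^c,\mathcal B^l)$ of DPWSs,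 consistent if $\mathcal B^l_A\subseteq\mathcal B^c_A$ for all $A$. A DPWS $\mathcal Q$ is universally consistent if $\mathcal Q_A\ne\emptyset$ for all $A$; a DBP $\mathcal B$ is universally consistent if $\mathcal B^l$ is. Three-valued value $\varphi^{\mathcal B,I,a}$: atoms get their two-valued value in $I$; $\neg$ by ${}^{-1}$, $\wedge$ and $\forall$ by $\le_t$-glb (Kleene); $(K_t\varphi)^{\mathcal B,I,a}$ is $\mathbf t$ if $t^{I,a}\in\mathcal A$ and $\varphi^{\mathcal B,J,a}=\mathbf t$ for all $J\in\mathcal B^c_{t^{I,a}}$; $\mathbf f$ if $t^{I,a}\notin\mathcal A$ or $\varphi^{\mathcal B,J,a}=\mathbf f$ for some $J\in\mathcal B^l_{t^{I,a}}$; $\mathbf u$ otherwise; for sentences the assignment is omitted. Translation to AEL. $\Sigma'$ consists of all symbols of $\Sigma_o$ and all symbols of $\Sigma_s$ with arity increased by one. A fixed element $\delta\in D$ is chosen. A $\Sigma'$-structure always has domain $D$, agrees with $I_o$ on $\Sigma_o$, and is normal: for every $f\in\Sigma_s$, $f^J(\bar d,d)=\delta$ whenever $d\notin\mathcal A$, and for every relation $R\in\Sigma_s$, $(\bar d,d)\notin R^J$ whenever $d\notin\mathcal A$. AEL formulas over $\Sigma'$ are built like dAEL formulas but with a single unindexed modal operator $K$; an AEL belief pair is a pair $(P,S)$ of sets of $\Sigma'$-structures, and the three-valued AEL value is defined like the dAEL one except that $(K\varphi)^{(P,S),J,a}$ is $\mathbf t$ if $\varphi$ has value $\mathbf t$ at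 all $J'\in P$, $\mathbf f$ if it has value $\mathbf f$ at some $J'\in S$, and $\mathbf u$ otherwise. For a $\Sigma$-term $t$ and $\Sigma'$-term $s$, $t_s$ is defined by $x_s=x$ for variables, $f(t_1,\dots,t_n)_s=f((t_1)_s,\dots,(t_n)_s,s)$ for $f\in\Sigma_s$, $f(t_1,\dots,t_n)_s=f((t_1)_s,\dots,(t_n)_s)$ for $f\in\Sigma_o$. $\tau_{\mathit{formula}}(s,\cdot)$: $P(t_1,\dots,t_n)\mapsto P((t_1)_s,\dots,(t_n)_s,s)$ if $P\in\Sigma_s$, $P((t_1)_s,\dots,(t_n)_s)$ if $P\in\Sigma_o$ or equality; commutes with $\neg,\wedge,\forall x$; $\tau_{\mathit{formula}}(s,K_t\phi)=\exists x(x=t_s\wedge\mathrm{Apred}(x)\wedge K\,\tau_{\mathit{formula}}(x,\phi))$ for a fresh variable $x$. For a family $(I_A)_{A\in\mathcal A}$ of structures, $\tau_{\mathit{structure}}((I_A)_A)$ is the $\Sigma'$-structure interpreting $\Sigma_o$ as $I_o$, each $f\in\Sigma_s$ by $f(\bar d,d)=f^{I_d}(\bar d)$ if $d\in\mathcal A$ and $\delta$ otherwise, and each relation $R\in\Sigma_s$ by $(\bar d,d)\in R$ iff $d\in\mathcal A$ and $\bar d\in R^{I_d}$. $\tau_{\mathit{pws}}(\mathcal Q)=\{\tau_{\mathit{structure}}((I_A)_A): I_A\in\mathcal Q_A\text{ for all }A\in\mathcal A\}$, and $\tau_{\mathit{beliefpair}}(\mathcal B)=(\tau_{\mathit{pws}}(\mathcal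 B^c),\tau_{\mathit{pws}}(\mathcal B^l))$. For a $\Sigma'$-structure $J$ and a closed $\Sigma'$-term $t$, $J_t$ is the $\Sigma$-structure with domain $D$ that interprets $\Sigma_o$ as $J$ does and each $s\in\Sigma_s$ by $s^{J_t}(d_1,\dots,d_n)=s^J(d_1,\dots,d_n,t^J)$ (for relation symbols: $\bar d\in s^{J_t}$ iff $(\bar d,t^J)\in s^J$). *)

From Stdlib Require Import List Arith ClassicalEpsilon.
Import ListNotations.
Set Implicit Arguments.

(* Function and relation symbols of Sigma = Sigma_o (+) Sigma_s.  The same
   symbol sets are used for Sigma' (subjective symbols get arity + 1).
   Arguments of symbols are given as lists; [ar]/[arR] give the arity in
   Sigma.  The objective structure I_o is ([Io],[IoR]); the agents are the
   elements of D satisfying [Ag]. *)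
Record setup := {
  Fs : Type;
  Rs : Type;
  subj : Fs -> bool;    (* true iff in Sigma_s *)
  subjR : Rs -> bool;
  ar : Fs -> nat;
  arR : Rs -> nat;
  D : Type;
  Io : Fs -> list D -> D;
  IoR : Rs -> list D -> Prop;
  Ag : D -> Prop;
  Apred : Rs;
  delta : D;
  Apred_obj : subjR Apred = false;
  Apred_ar : arR Apred = 1;
  Apred_int : forall d, IoR Apred [d] <-> Ag d;
  agent_const : forall A, Ag A ->
     exists c : Fs, subj c = false /\ ar c = 0 /\ Io c [] = A
}.

Section Syntax.
Variable X : setup.

Inductive term : Type :=
| Var : nat -> term
| App : Fs X -> list term -> term.

(* dAEL formulas over Sigma *)
Inductive form : Type :=
| Atom : Rs X -> list term -> form
| Eqf : term -> term -> form
| Neg : form -> form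
| And : form -> form -> form
| All : nat -> form -> form
| Kt : term -> form -> form.

(* AEL formulas over Sigma' *)
Inductive aform : Type :=
| AAtom : Rs X -> list term -> aform
| AEqf : term -> term -> aform
| ANeg : aform -> aform
| AAnd : aform -> aform -> aform
| AAll : nat -> aform -> aform
| AK : aform -> aform.

Definition AEx (x : nat) (p : aform) : aform := ANeg (AAll x (ANeg p)).

Fixpoint wf_term (t : term) : Prop :=
  match t with
  | Var _ => True
  | App f ts => length ts = ar X f /\ (fix g l := match l with
                   | [] => True | u :: l' => wf_term u /\ g l' end) ts
  end.

Fixpoint wf_term' (t : term) : Prop :=
  match t with
  | Var _ => True
  | App f ts => length ts = ar X f + (if subj X f then 1 else 0) /\
                (fix g l := match l with
                   | [] => True | u :: l' => wf_term' u /\ g l' end) ts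
  end.

Fixpoint wf_form (p : form) : Prop :=
  match p with
  | Atom P ts => length ts = arR X P /\ Forall wf_term ts
  | Eqf t1 t2 => wf_term t1 /\ wf_term t2
  | Neg q => wf_form q
  | And q r => wf_form q /\ wf_form r
  | All _ q => wf_form q
  | Kt t q => wf_term t /\ wf_form q
  end.

Fixpoint occurs (x : nat) (t : term) : Prop :=
  match t with
  | Var y => x = y
  | App _ ts => (fix g l := match l with
                   | [] => False | u :: l' => occurs x u \/ g l' end) ts
  end.

Definition closed_term (t : term) : Prop := forall x, ~ occurs x t.

Fixpoint free_in (x : nat) (p : form) : Prop :=
  match p with
  | Atom _ ts => Exists (occurs x) ts
  | Eqf t1 t2 => occurs x t1 \/ occurs x t2
  | Neg q => free_in x q
  | And q r => free_in x q \/ free_in x r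
  | All y q => x <> y /\ free_in x q
  | Kt t q => occurs x t \/ free_in x q
  end.

Definition sentence (p : form) : Prop := forall x, ~ free_in x p.

Fixpoint maxv (t : term) : nat :=
  match t with
  | Var y => y
  | App _ ts => (fix g l := match l with
                   | [] => 0 | u :: l' => Nat.max (maxv u) (g l') end) ts
  end.

Fixpoint maxv_form (p : form) : nat :=
  match p with
  | Atom _ ts => fold_right (fun u n => Nat.max (maxv u) n) 0 ts
  | Eqf t1 t2 => Nat.max (maxv t1) (maxv t2)
  | Neg q => maxv_form q
  | And q r => Nat.max (maxv_form q) (maxv_form r)
  | All y q => Nat.max y (maxv_form q)
  | Kt t q => Nat.max (maxv t) (maxv_form q)
  end.

Fixpoint tr_term (s t : term) : term :=
  match t with
  | Var x => Var x
  | App f ts => App f (map (tr_term s) ts ++ (if subj X f then [s] else []))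
  end.

(* tau_formula(s, phi); the fresh variable is one larger than every variable
   occurring in s, t or phi. *)
Fixpoint tr_form (s : term) (p : form) : aform :=
  match p with
  | Atom P ts => AAtom P (map (tr_term s) ts ++ (if subjR X P then [s] else []))
  | Eqf t1 t2 => AEqf (tr_term s t1) (tr_term s t2)
  | Neg q => ANeg (tr_form s q)
  | And q r => AAnd (tr_form s q) (tr_form s r)
  | All x q => AAll x (tr_form s q)
  | Kt t q =>
      let x := S (Nat.max (maxv s) (Nat.max (maxv t) (maxv_form q))) in
      AEx x (AAnd (AEqf (Var x) (tr_term s t))
                  (AAnd (AAtom (Apred X) [Var x]) (AK (tr_form (Var x) q))))
  end.

(* A structure (Sigma- or Sigma'-) with domain D agreeing with I_o on the
   objective symbols: only the interpretation of the subjective symbols is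
   stored; objective symbols are always interpreted by I_o (see [interp]). *)
Record str := mkStr {
  sf : Fs X -> list (D X) -> D X;
  sr : Rs X -> list (D X) -> Prop
}.

Definition interp (I : str) (f : Fs X) (l : list (D X)) : D X :=
  if subj X f then sf I f l else Io X f l.
Definition interpR (I : str) (P : Rs X) (l : list (D X)) : Prop :=
  if subjR X P then sr I P l else IoR X P l.

Definition normal (J : str) : Prop :=
  (forall f l d, subj X f = true -> length l = ar X f -> ~ Ag X d ->
     sf J f (l ++ [d]) = delta X) /\
  (forall P l d, subjR X P = true -> length l = arR X P -> ~ Ag X d ->
     ~ sr J P (l ++ [d])).

Definition asg := nat -> D X.
Definition upd (a : asg) (x : nat) (d : D X) : asg :=
  fun y => if Nat.eqb y x then d else a y.

Fixpoint teval (I : str) (a : asg) (t : term) : D X :=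
  match t with
  | Var x => a x
  | App f ts => interp I f (map (teval I a) ts)
  end.

Inductive tv := tT | tF | tU.
Definition tinv (v : tv) : tv := match v with tT => tF | tF => tT | tU => tU end.
(* glb in the truth order f < u < t *)
Definition tmin (v w : tv) : tv :=
  match v, w with
  | tF, _ | _, tF => tF
  | tU, _ | _, tU => tU
  | tT, tT => tT
  end.
Definition tbool (b : Prop) : tv :=
  if excluded_middle_informative b then tT else tF.
Definition tglb (v : D X -> tv) : tv :=
  if excluded_middle_informative (forall d, v d = tT) then tT
  else if excluded_middle_informative (exists d, v d = tF) then tF
  else tU.

Definition pws := str -> Prop.
Definition dpws := D X -> pws.            (* only the agents' components matter *)
Record dbp := mkDBP { Bc : dpws; Bl : dpws }.

Definition consistent (B : dbp) : Prop :=
  forall A, Ag X A -> forall I, Bl B A I -> Bc B A I.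
Definition univ_consistent (B : dbp) : Prop :=
  forall A, Ag X A -> exists I, Bl B A I.

Fixpoint val (B : dbp) (I : str) (a : asg) (p : form) : tv :=
  match p with
  | Atom P ts => tbool (interpR I P (map (teval I a) ts))
  | Eqf t1 t2 => tbool (teval I a t1 = teval I a t2)
  | Neg q => tinv (val B I a q)
  | And q r => tmin (val B I a q) (val B I a r)
  | All x q => tglb (fun d => val B I (upd a x d) q)
  | Kt t q =>
      let A := teval I a t in
      if excluded_middle_informative
           (Ag X A /\ forall J, Bc B A J -> val B J a q = tT) then tT
      else if excluded_middle_informative
           (~ Ag X A \/ exists J, Bl B A J /\ val B J a q = tF) then tF
      else tU
  end.

Fixpoint aval (P S : pws) (J : str) (a : asg) (p : aform) : tv :=
  match p with
  | AAtom R ts => tbool (interpR J R (map (teval J a) ts))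
  | AEqf t1 t2 => tbool (teval J a t1 = teval J a t2)
  | ANeg q => tinv (aval P S J a q)
  | AAnd q r => tmin (aval P S J a q) (aval P S J a r)
  | AAll x q => tglb (fun d => aval P S J (upd a x d) q)
  | AK q =>
      if excluded_middle_informative (forall J', P J' -> aval P S J' a q = tT)
      then tT
      else if excluded_middle_informative (exists J', S J' /\ aval P S J' a q = tF)
      then tF
      else tU
  end.

Fixpoint unsnoc (l : list (D X)) : option (list (D X) * D X) :=
  match l with
  | [] => None
  | [d] => Some ([], d)
  | d :: l' => match unsnoc l' with
               | Some (m, e) => Some (d :: m, e)
               | None => None
               end
  end.

(* tau_structure((I_A)_A): f(dbar, d) = f^{I_d}(dbar) if d is an agent,
   delta otherwise; similarly for relations. *)
Definition tau_structure (I : D X -> str) : str :=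
  mkStr (fun f l => match unsnoc l with
                    | Some (m, d) =>
                        if excluded_middle_informative (Ag X d)
                        then sf (I d) f m else delta X
                    | None => delta X
                    end)
        (fun P l => match unsnoc l with
                    | Some (m, d) => Ag X d /\ sr (I d) P m
                    | None => False
                    end).

Definition tau_pws (Q : dpws) : pws :=
  fun J => exists I : D X -> str,
      (forall A, Ag X A -> Q A (I A)) /\ J = tau_structure I.

Definition tau_beliefpair (B : dbp) : pws * pws :=
  (tau_pws (Bc B), tau_pws (Bl B)).

(* J_t for a closed Sigma'-term t (t^J does not depend on the assignment;
   we use the constant assignment delta). *)
Definition struct_at (J : str) (t : term) : str :=
  let d := teval J (fun _ => delta X) t in
  mkStr (fun f l => sf J f (l ++ [d])) (fun P l => sr J P (l ++ [d])).

End Syntax.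

From Stdlib Require Import List Arith Lia ClassicalEpsilon FunctionalExtensionality PropExtensionality.
From Corelib Require Import ssreflect.
Import ListNotations.
Set Implicit Arguments.

(* The theorem is proved by induction on phi, generalised to an arbitrary
   Sigma'-term s whose variables are larger than all variables of phi, the
   value of s playing the role of t^J.  In the case K_t psi, the
   translation [exists x (x = t_s /\ Apred(x) /\ K psi_x)] has value [f] unless
   the agent A denoted by t_s exists, and then it is the value of [K psi_x] at
   x := A.  A structure of tau_pws(Q) restricted to A is an arbitrary structure
   of Q_A: every I in Q_A extends to a family (I_A')_A' with I_A = I, because
   every Q_A' is nonempty -- for B^l by universal consistency, for B^c by
   consistency on top of it. *)

Section Translation.
Context {X : setup}.

(* [J] viewed as a Sigma-structure at the extra argument [d]; [J_t] is
   [struct_at_elt J t^J]. *)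
Definition struct_at_elt (J : str X) (d : D X) : str X :=
  mkStr X (fun f l => sf J f (l ++ [d])) (fun P l => sr J P (l ++ [d])).

Definition tcase (P Q : Prop) : tv :=
  if excluded_middle_informative P is left _ then tT
  else if excluded_middle_informative Q is left _ then tF else tU.

Definition kval (P S : pws X) (v : str X -> tv) : tv :=
  tcase (forall J, P J -> v J = tT) (exists J, S J /\ v J = tF).

Lemma tcase_ext (P1 P2 Q1 Q2 : Prop) :
  (P1 <-> P2) -> (Q1 <-> Q2) -> tcase P1 Q1 = tcase P2 Q2.
Proof.
by move=> /propositional_extensionality -> /propositional_extensionality ->.
Qed.

Fixpoint term_nested_ind (P : term X -> Prop) (HV : forall n, P (Var X n))
  (HA : forall f ts, Forall P ts -> P (App f ts)) (t : term X) : P t :=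
  match t with
  | Var _ n => HV n
  | App f ts => HA f ts ((fix g l := match l return Forall P l with
        | [] => Forall_nil _
        | u :: l' => Forall_cons _ (@term_nested_ind P HV HA u) (g l') end) ts)
  end.

Lemma occurs_App y f (ts : list (term X)) :
  occurs y (App f ts) <-> Exists (occurs y) ts.
Proof.
rewrite /=; elim: ts => [|u l IH] /=; first by split=> // H; inversion H.
rewrite IH; split; first by case; auto.
by move=> H; inversion H; auto.
Qed.

Lemma maxv_App f (ts : list (term X)) :
  maxv (App f ts) = fold_right (fun u n => Nat.max (maxv u) n) 0 ts.
Proof. by rewrite /=; elim: ts => //= u l ->. Qed.

Lemma maxv_In u (ts : list (term X)) :
  In u ts -> maxv u <= fold_right (fun v n => Nat.max (maxv v) n) 0 ts.
Proof. elim: ts => [|v l IH] //= [->|/IH]; lia. Qed.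

Lemma occurs_le_maxv y (u : term X) : occurs y u -> y <= maxv u.
Proof.
elim/term_nested_ind: u => [n /= -> //|f ts /Forall_forall IH].
rewrite occurs_App maxv_App => /Exists_exists [v [/[dup] Hin /maxv_In ? /(IH v Hin)]].
lia.
Qed.

Lemma occurs_tr_term y s (u : term X) :
  occurs y (tr_term s u) -> occurs y s \/ occurs y u.
Proof.
elim/term_nested_ind: u => [n|f ts /Forall_forall IH] /=; first by right.
rewrite -/(occurs y (App f _)) occurs_App -/(occurs y (App f ts)) occurs_App.
move=> /Exists_app [/Exists_exists [_ [/in_map_iff [v [<- Hin]] /(IH v Hin)]]|].
- by case; [left|right; apply/Exists_exists; exists v].
- by case: (subj X f) => /= /Exists_exists [v [Hin Hy]]; case: Hin Hy => // <-; left.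
Qed.

Lemma upd_same (a : asg X) x d : upd a x d x = d.
Proof. by rewrite /upd Nat.eqb_refl. Qed.

Lemma upd_other (a : asg X) x d y : y <> x -> upd a x d y = a y.
Proof. by rewrite /upd => /Nat.eqb_neq ->. Qed.

Lemma teval_eq_on (I : str X) (u : term X) (a a' : asg X) :
  (forall y, occurs y u -> a y = a' y) -> teval I a u = teval I a' u.
Proof.
elim/term_nested_ind: u a a' => [n|f ts /Forall_forall IH] a a' Haa' /=.
  by apply: Haa'.
congr interp; apply: map_ext_in => v Hin; apply: IH => // y Hy.
by apply: Haa'; apply/occurs_App/Exists_exists; exists v.
Qed.

Lemma teval_tr_term (J : str X) (a : asg X) s (u : term X) :
  teval J a (tr_term s u) = teval (struct_at_elt J (teval J a s)) a u.
Proof.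
elim/term_nested_ind: u => [//|f ts /Forall_forall IH] /=.
rewrite /interp map_app map_map (map_ext_in _ _ _ IH).
by case: (subj X f); rewrite /= ?app_nil_r.
Qed.

Lemma val_Kt B (I : str X) (a : asg X) t q :
  val B I a (Kt t q) =
  if excluded_middle_informative (Ag X (teval I a t)) is left _
  then kval (Bc B (teval I a t)) (Bl B (teval I a t)) (fun J => val B J a q)
  else tF.
Proof.
rewrite /= /kval /tcase.
case: (excluded_middle_informative (Ag X _)) => HA;
  repeat case: excluded_middle_informative => //; tauto.
Qed.

Lemma val_eq_on B (q : form X) (I : str X) (a a' : asg X) :
  (forall y, y <= maxv_form q -> a y = a' y) -> val B I a q = val B I a' q.
Proof.
elim: q I a a' => [P ts|t1 t2|q IH|q1 IH1 q2 IH2|x q IH|t q IH] I a a' Haa'.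
- congr tbool; congr interpR; apply: map_ext_in => u /maxv_In Hu.
  by apply: teval_eq_on => y /occurs_le_maxv Hy; apply: Haa'; rewrite /=; lia.
- by congr tbool; congr eq; apply: teval_eq_on => y /occurs_le_maxv Hy;
    apply: Haa'; rewrite /=; lia.
- by rewrite /= (IH _ a a').
- by rewrite /= (IH1 _ a a') ?(IH2 _ a a') // => y Hy; apply: Haa'; rewrite /=; lia.
- congr tglb; apply: functional_extensionality => d; apply: IH => y Hy.
  by rewrite /upd; case: (Nat.eqb y x) => //; apply: Haa'; rewrite /=; lia.
- rewrite !val_Kt; have -> : teval I a t = teval I a' t.
    by apply: teval_eq_on => y /occurs_le_maxv Hy; apply: Haa'; rewrite /=; lia.
  case: excluded_middle_informative => // _.
  congr kval; apply: functional_extensionality => J.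
  by apply: IH => y Hy; apply: Haa'; rewrite /=; lia.
Qed.

Lemma aval_AK (P S : pws X) (J : str X) (a : asg X) p :
  aval P S J a (AK p) = kval P S (fun J' => aval P S J' a p).
Proof. by []. Qed.

Lemma tglb_single (w : D X -> tv) A :
  (forall d, d <> A -> w d = tT) -> tglb X w = w A.
Proof.
move=> Hw; rewrite /tglb.
case: excluded_middle_informative => [//|Hall].
case: excluded_middle_informative => [[d Hd]|Hex].
- by case: (excluded_middle_informative (d = A)) => [<-//|/Hw]; rewrite Hd.
- case HwA: (w A) => //; exfalso.
  + by apply: Hall => d; case: (excluded_middle_informative (d = A)) => [->|/Hw].
  + by apply: Hex; exists A.
Qed.

(* The value of [exists x (x = A /\ Apred(x) /\ _)] as a function of A. *)
Lemma tglb_agent_eq (A : D X) (k : D X -> tv) :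
  tinv (tglb X (fun d => tinv (tmin (tbool (d = A)) (tmin (tbool (Ag X d)) (k d)))))
  = if excluded_middle_informative (Ag X A) is left _ then k A else tF.
Proof.
rewrite (@tglb_single _ A) => [d HdA|].
  by rewrite /tbool; case: excluded_middle_informative.
rewrite /tbool; case: excluded_middle_informative => // _.
by case: excluded_middle_informative => _; case: (k A).
Qed.

Lemma aval_ex_agent (P S : pws X) (J : str X) (a : asg X) x u p :
  ~ occurs x u ->
  aval P S J a (AEx x (AAnd (AEqf (Var X x) u) (AAnd (AAtom (Apred X) [Var X x]) p)))
  = if excluded_middle_informative (Ag X (teval J a u)) is left _
    then aval P S J (upd a x (teval J a u)) p else tF.
Proof.
move=> Hx; rewrite -(tglb_agent_eq _ (fun d => aval P S J (upd a x d) p)) /=.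
congr (tinv (tglb X _)); apply: functional_extensionality => d.
rewrite upd_same (teval_eq_on _ _ (upd a x d) a) => [y Hy|].
  by apply: upd_other => Eyx; apply: Hx; rewrite -Eyx.
rewrite /interpR (Apred_obj X).
by rewrite (propositional_extensionality _ _ (Apred_int X d)).
Qed.

Lemma unsnoc_app (l : list (D X)) d : unsnoc X (l ++ [d]) = Some (l, d).
Proof. by elim: l => [|e l /= ->] //; case: l. Qed.

Lemma struct_at_elt_tau (I : D X -> str X) {A : D X} :
  Ag X A -> struct_at_elt (tau_structure I) A = I A.
Proof.
move=> HA; case E: (I A) => [f r]; rewrite /struct_at_elt /tau_structure /=.
congr mkStr; apply: functional_extensionality => g;
  apply: functional_extensionality => l; rewrite unsnoc_app E //.
- by case: excluded_middle_informative.
- by apply: propositional_extensionality; intuition.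
Qed.

Lemma dpws_family_through {Q : dpws X} {A} {I : str X} :
  (forall A', Ag X A' -> exists I', Q A' I') -> Q A I ->
  exists F : D X -> str X, (forall A', Ag X A' -> Q A' (F A')) /\ F A = I.
Proof.
move=> HQ HI.
exists (fun A' => if excluded_middle_informative (A' = A) is left _ then I
             else epsilon (inhabits I) (Q A')); split.
- move=> A' HA'; case: excluded_middle_informative => [->//|_].
  exact: epsilon_spec (HQ A' HA').
- by case: excluded_middle_informative.
Qed.

Section TauPws.
Context {Q : dpws X} {A : D X} (Pr : str X -> Prop).
Hypotheses (HQ : forall A', Ag X A' -> exists I, Q A' I) (HA : Ag X A).

Lemma tau_pws_forall_at :
  (forall J, tau_pws Q J -> Pr (struct_at_elt J A)) <-> (forall I, Q A I -> Pr I).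
Proof.
split=> [H I HI|H _ [F [HF ->]]].
- have [F [HF <-]] := dpws_family_through HQ HI.
  by rewrite -(struct_at_elt_tau F HA); apply: H; exists F.
- by rewrite struct_at_elt_tau //; apply: H; apply: HF.
Qed.

Lemma tau_pws_exists_at :
  (exists J, tau_pws Q J /\ Pr (struct_at_elt J A)) <-> (exists I, Q A I /\ Pr I).
Proof.
split=> [[_ [[F [HF ->]]]]|[I [HI H]]].
- by rewrite struct_at_elt_tau //; exists (F A); auto.
- have [F [HF EF]] := dpws_family_through HQ HI.
  exists (tau_structure F); split; first by exists F.
  by rewrite struct_at_elt_tau // EF.
Qed.

End TauPws.

Lemma kval_tau_pws {Q R : dpws X} {A : D X} (v : str X -> tv) :
  (forall A', Ag X A' -> exists I, Q A' I) ->
  (forall A', Ag X A' -> exists I, R A' I) -> Ag X A ->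
  kval (tau_pws Q) (tau_pws R) (fun J => v (struct_at_elt J A)) = kval (Q A) (R A) v.
Proof.
move=> HQ HR HA; apply: tcase_ext.
- exact: (tau_pws_forall_at (fun I => v I = tT) HQ HA).
- exact: (tau_pws_exists_at (fun I => v I = tF) HR HA).
Qed.

Section Correctness.
Variable B : dbp X.
Hypotheses (HC : consistent B) (HU : univ_consistent B).

Lemma Bc_nonempty A : Ag X A -> exists I, Bc B A I.
Proof. by move=> HA; have [I HI] := HU A HA; exists I; exact: HC. Qed.

Local Notation Pc := (tau_pws (Bc B)).
Local Notation Pl := (tau_pws (Bl B)).

Lemma aval_tr_form (q : form X) s (J : str X) (a : asg X) :
  (forall z, occurs z s -> maxv_form q < z) ->
  aval Pc Pl J a (tr_form s q) = val B (struct_at_elt J (teval J a s)) a q.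
Proof.
elim: q s J a => [R ts|t1 t2|q IH|q1 IH1 q2 IH2|x q IH|t q IH] s J a Hs.
- rewrite /= /interpR map_app map_map (map_ext _ _ (teval_tr_term J a s)).
  by case: (subjR X R); rewrite /= ?app_nil_r.
- by rewrite /= !teval_tr_term.
- by rewrite /= IH.
- by rewrite /= IH1 ?IH2 // => z /Hs /=; lia.
- rewrite /=; f_equal; apply: functional_extensionality => d.
  rewrite IH => [z /Hs /=|]; first lia.
  congr (val B (struct_at_elt J _) _ q); apply: teval_eq_on => y /Hs /= Hy.
  by apply: upd_other; lia.
- rewrite val_Kt -teval_tr_term [tr_form _ _]/= aval_ex_agent => [/occurs_tr_term|].
    by case=> /occurs_le_maxv; lia.
  set x := S _; set A := teval J a (tr_term s t).
  case: excluded_middle_informative => // HA.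
  rewrite aval_AK -(kval_tau_pws (fun I => val B I a q) Bc_nonempty HU HA).
  f_equal; apply: functional_extensionality => J'.
  rewrite IH /= ?upd_same => [z ->|]; first by rewrite /x; lia.
  by apply: val_eq_on => y Hy; apply: upd_other; rewrite /x; lia.
Qed.

End Correctness.

Lemma struct_at_closed (J : str X) t (a : asg X) :
  closed_term t -> struct_at J t = struct_at_elt J (teval J a t).
Proof.
move=> Hcl; rewrite /struct_at.
by rewrite (teval_eq_on J t _ a) // => y /Hcl.
Qed.

End Translation.

Theorem mainTheorem10 (X : setup) (t : term X) (phi : form X) (B : dbp X)
  (J : str X) :
  closed_term t -> wf_term' t ->
  sentence phi -> wf_form phi ->
  consistent B -> univ_consistent B ->
  normal J ->
  forall a : asg X,
    aval (fst (tau_beliefpair B)) (snd (tau_beliefpair B)) J a (tr_form t phi)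
    = val B (struct_at J t) a phi.
Proof.
move=> Hcl _ _ _ HC HU _ a.
rewrite (struct_at_closed J a Hcl).
by apply: aval_tr_form => // z /Hcl.
Qed.
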